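(* Let $\eta>0$, let $\ell_i^{(1)},\dots,\ell_i^{(T)}\in\mathbb{R}^{n_i}$ be an arbitrary sequence of vectors (with $\ell_i^{(0)}=0$), and let $x_i^{(1)},\dots,x_i^{(T)}$ be the Optimistic Hedge iterates with step size $\eta$ on this sequence. Define $\tilde x_i^{(0)}$ to be the uniform distribution on $[n_i]$ and, for $t\in[T]$, $\tilde x_i^{(t)}(j)=\frac{x_i^{(t)}(j)\exp(-\eta(\ell_i^{(t)}(j)-\ell_i^{(t-1)}(j)))}{\sum_kx_i^{(t)}(k)\exp(-\eta(\ell_i^{(t)}(k)-\ell_i^{(t-1)}(k)))}$. Then for every $x^\star\in\Delta^{n_i}$, $$\sum_{t=1}^T\langle x_i^{(t)}-x^\star,\ell_i^{(t)}\rangle\le\frac{\ln n_i}{\eta}+\sum_{t=1}^T\|x_i^{(t)}-\tilde x_i^{(t)}\|^*_{x_i^{(t)}}\sqrt{\mathrm{Var}_{x_i^{(t)}}(\ell_i^{(t)}-\ell_i^{(t-1)})}-\frac1\eta\sum_{t=1}^T\mathrm{KL}(\tilde x_i^{(t)};x_i^{(t)})-\frac1\eta\sum_{t=1}^T\mathrm{KL}(x_i^{(t)};\tilde x_i^{(t-1)}).$$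
   Context: Optimistic Hedge: $x_i^{(1)}$ uniform on $[n_i]$, $x_i^{(t+1)}(j)\propto x_i^{(t)}(j)\exp(-\eta(2\ell_i^{(t)}(j)-\ell_i^{(t-1)}(j)))$. For full-support $P\in\Delta^n$ and $v\in\mathbb{R}^n$, $\|v\|^*_P=\sqrt{\sum_jv(j)^2/P(j)}$ and $\mathrm{Var}_P(v)=\sum_jP(j)(v(j)-\langle P,v\rangle)^2$. $\mathrm{KL}(P;Q)=\sum_jP(j)\ln(P(j)/Q(j))$ with the natural logarithm; $\ln n_i$ is the natural logarithm. *)

From HB Require Import structures.
From mathcomp Require Import all_boot all_order all_algebra.
From mathcomp Require Import all_classical all_reals all_analysis.
Set Implicit Arguments. Unset Strict Implicit. Unset Printing Implicit Defensive.
Import Order.TTheory GRing.Theory Num.Theory.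
Local Open Scope ring_scope.

Section OH.
Variables (R : realType) (n : nat).

Definition uniform_dist : 'I_n -> R := fun _ => (n%:R)^-1.

Definition in_simplex (P : 'I_n -> R) : Prop :=
  (forall j, 0 <= P j) /\ \sum_(j < n) P j = 1.

Definition mw_update (P v : 'I_n -> R) : 'I_n -> R :=
  fun j => P j * expR (v j) / \sum_(k < n) P k * expR (v k).

Definition loss0 (ell : nat -> 'I_n -> R) (t : nat) : 'I_n -> R :=
  if t is t'.+1 then ell t else fun _ => 0.

(* Optimistic Hedge iterates: oh_iter eta ell t = x^(t) for t >= 1,
   x^(1) uniform, x^(t+1)(j) ∝ x^(t)(j) exp(-eta (2 ell^(t)(j) - ell^(t-1)(j))).
   (The value at t = 0 is unused; it is set to uniform.) *)
Fixpoint oh_iter (eta : R) (ell : nat -> 'I_n -> R) (t : nat) : 'I_n -> R :=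
  match t with
  | 0 => uniform_dist
  | 1 => uniform_dist
  | (s.+1) as t1 =>
      mw_update (oh_iter eta ell s)
        (fun j => - eta * (2 * loss0 ell s j - loss0 ell s.-1 j))
  end.

Definition oh_tilde (eta : R) (ell : nat -> 'I_n -> R) (t : nat) : 'I_n -> R :=
  if t is t'.+1 then
    mw_update (oh_iter eta ell t)
      (fun j => - eta * (loss0 ell t j - loss0 ell t' j))
  else uniform_dist.

Definition dotv (u v : 'I_n -> R) : R := \sum_(j < n) u j * v j.

Definition dual_norm (P v : 'I_n -> R) : R :=
  Num.sqrt (\sum_(j < n) v j ^+ 2 / P j).

Definition varP (P v : 'I_n -> R) : R :=
  \sum_(j < n) P j * (v j - dotv P v) ^+ 2.

Definition KL (P Q : 'I_n -> R) : R :=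
  \sum_(j < n) P j * ln (P j / Q j).

End OH.

From HB Require Import structures.
From mathcomp Require Import all_boot all_order all_algebra.
From mathcomp Require Import all_classical all_reals all_analysis.
From mathcomp Require Import lra ring.
Import Order.TTheory GRing.Theory Num.Theory.
Set Implicit Arguments. Unset Strict Implicit.
Local Open Scope ring_scope.

(* Writing MW(Q, v) for the multiplicative-weights update Q(j) e^{v(j)} / Z,
   Optimistic Hedge consists of two interleaved MW sequences started from the
   uniform distribution:
       x~(t) = MW(x~(t-1), -eta l(t))   and   x(t) = MW(x~(t-1), -eta l(t-1)).
   The proof rests on three general facts about full-support distributions:
   - the three-point identity  KL(u;Q) - KL(u;Q') - KL(Q';Q) = <u - Q', v>
     for Q' = MW(Q, v); applied with u = x* (step to x~(t)) and with u = x~(t)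
     (step to x(t)) it gives an exact one-step regret identity;
   - a weighted Cauchy-Schwarz inequality, bounding the prediction-error term
     <x - x~, d> = <x - x~, d - <x,d>> by ||x - x~||*_x sqrt(Var_x d);
   - KL(u;uniform) - KL(u;P) <= ln n.
   Summing the one-step identity telescopes the KL(x*; x~(t)) terms, and the
   two inequalities bound what remains. *)

Section PositiveDistributions.
Variables (R : realType) (n : nat).
Implicit Types (P Q u v w p d : 'I_n -> R).

Definition pos_dist P : Prop := (forall j, 0 < P j) /\ \sum_(j < n) P j = 1.

Definition mw_norm P v : R := \sum_(k < n) P k * expR (v k).

Lemma mw_updateE P v j : mw_update P v j = P j * expR (v j) / mw_norm P v.
Proof. by []. Qed.

Lemma mw_update0 P v : \sum_(j < n) P j = 1 -> (forall j, v j = 0) ->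
  mw_update P v = P.
Proof.
move=> P_sum1 v0; apply/funext => j; rewrite mw_updateE /mw_norm.
under eq_bigr => k _ do rewrite v0 expR0 mulr1.
by rewrite v0 expR0 mulr1 P_sum1 divr1.
Qed.

Lemma uniform_pos_dist : (0 < n)%N -> pos_dist (@uniform_dist R n).
Proof.
move=> n_gt0; split=> [j|]; first by rewrite /uniform_dist invr_gt0 ltr0n.
rewrite /uniform_dist sumr_const card_ord -[_ *+ n]mulr_natr mulVf //.
by rewrite pnatr_eq0 -lt0n.
Qed.

Lemma pos_dist_le1 P j : pos_dist P -> P j <= 1.
Proof.
move=> [P_gt0 <-]; rewrite (bigD1 j) //= lerDl.
by apply: sumr_ge0 => i _; exact: ltW.
Qed.

Lemma KL_subr u P Q : (forall j, 0 <= u j) ->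
  (forall j, 0 < P j) -> (forall j, 0 < Q j) ->
  KL u Q - KL u P = \sum_(j < n) u j * ln (P j / Q j).
Proof.
move=> u_ge0 P_gt0 Q_gt0; rewrite /KL -sumrB; apply: eq_bigr => j _.
have [->|uj_neq0] := eqVneq (u j) 0; first by rewrite !mul0r subr0.
have uj_gt0 : 0 < u j by rewrite lt0r uj_neq0 u_ge0.
by rewrite !ln_div ?posrE //; ring.
Qed.

Lemma KL_self P : (forall j, 0 < P j) -> KL P P = 0.
Proof.
by move=> P_gt0; rewrite /KL big1 // => j _; rewrite divff ?ln1 ?mulr0 ?lt0r_neq0.
Qed.

Lemma KL_uniform_subr_le u P : (0 < n)%N -> in_simplex u -> pos_dist P ->
  KL u (@uniform_dist R n) - KL u P <= ln n%:R.
Proof.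
move=> n_gt0 [u_ge0 u_sum1] P_dist; have [P_gt0 _] := P_dist.
have [U_gt0 _] := uniform_pos_dist n_gt0.
have -> : ln n%:R = \sum_(j < n) u j * ln (n%:R : R).
  by rewrite -mulr_suml u_sum1 mul1r.
rewrite KL_subr //; apply: ler_sum => j _.
apply: ler_wpM2l => //; rewrite /uniform_dist.
rewrite ln_div ?posrE ?invr_gt0 ?ltr0n // lnV ?posrE ?ltr0n // opprK.
by rewrite gerDr ln_le0 // pos_dist_le1.
Qed.

Lemma weighted_CS_sqr p u v : (forall j, 0 < p j) ->
  (\sum_(j < n) u j * v j) ^+ 2
  <= (\sum_(j < n) u j ^+ 2 / p j) * (\sum_(j < n) p j * v j ^+ 2).
Proof.
move=> p_gt0; set S := \sum_(j < n) _; set A := \sum_(j < n) _.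
set B := \sum_(j < n) _.
have B_ge0 : 0 <= B by apply: sumr_ge0 => j _; rewrite mulr_ge0 ?sqr_ge0 ?ltW.
have [B0|B_neq0] := eqVneq B 0.
  have v0 j : v j = 0.
    have /eqP := psumr_eq0P (fun i _ => mulr_ge0 (ltW (p_gt0 i)) (sqr_ge0 (v i)))
      B0 (i := j) isT.
    by rewrite mulf_eq0 (negbTE (lt0r_neq0 (p_gt0 j))) sqrf_eq0 => /eqP.
  rewrite /S big1 => [|j _]; last by rewrite v0 mulr0.
  by rewrite B0 mulr0 expr2 mulr0.
have B_gt0 : 0 < B by rewrite lt0r B_neq0.
(* 0 <= sum_j (u_j - lam p_j v_j)^2 / p_j with the optimal lam = S / B *)
have quad_ge0 : 0 <= A - S ^+ 2 / B.
  have -> : A - S ^+ 2 / B = \sum_(j < n) (u j - S / B * p j * v j) ^+ 2 / p j.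
    transitivity (A - 2 * (S / B) * S + (S / B) ^+ 2 * B).
      by field.
    rewrite /A {2}/S /B !mulr_sumr -sumrB -big_split /=.
    by apply: eq_bigr => j _; field; rewrite lt0r_neq0.
  by apply: sumr_ge0 => j _; rewrite divr_ge0 ?sqr_ge0 ?ltW.
rewrite -subr_ge0 (_ : _ - _ = B * (A - S ^+ 2 / B)) ?mulr_ge0 //.
by field.
Qed.

Lemma weighted_CS p u v : (forall j, 0 < p j) ->
  \sum_(j < n) u j * v j
  <= Num.sqrt (\sum_(j < n) u j ^+ 2 / p j) * Num.sqrt (\sum_(j < n) p j * v j ^+ 2).
Proof.
move=> p_gt0; have A_ge0 : 0 <= \sum_(j < n) u j ^+ 2 / p j.
  by apply: sumr_ge0 => j _; rewrite divr_ge0 ?sqr_ge0 ?ltW.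
rewrite -sqrtrM // (le_trans (ler_norm _)) // -sqrtr_sqr ler_sqrt.
  exact: weighted_CS_sqr.
by rewrite mulr_ge0 // sumr_ge0 // => j _; rewrite mulr_ge0 ?sqr_ge0 ?ltW.
Qed.

(* The inner product of a difference of distributions with d only sees the
   fluctuation of d around its mean, hence is bounded by local norms. *)
Lemma dotv_subr_le_dual_var P Q d : pos_dist P -> \sum_(j < n) Q j = 1 ->
  dotv (fun j => P j - Q j) d <= dual_norm P (fun j => P j - Q j) * Num.sqrt (varP P d).
Proof.
move=> [P_gt0 P_sum1] Q_sum1.
have -> : dotv (fun j => P j - Q j) d
    = \sum_(j < n) (P j - Q j) * (d j - dotv P d).
  under [RHS]eq_bigr => j _ do rewrite mulrBr.
  by rewrite sumrB -mulr_suml sumrB P_sum1 Q_sum1 subrr mul0r subr0.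
exact: weighted_CS.
Qed.

Section Update.
Hypothesis n_gt0 : (0 < n)%N.

Lemma mw_norm_gt0 P v : (forall j, 0 < P j) -> 0 < mw_norm P v.
Proof.
move=> P_gt0; rewrite /mw_norm (bigD1 (Ordinal n_gt0)) //=.
rewrite ltr_pwDl ?mulr_gt0 ?expR_gt0 //.
by apply: sumr_ge0 => i _; rewrite mulr_ge0 ?expR_ge0 // ltW.
Qed.

Lemma mw_update_gt0 P v j : (forall k, 0 < P k) -> 0 < mw_update P v j.
Proof.
by move=> P_gt0; rewrite mw_updateE divr_gt0 ?mw_norm_gt0 // mulr_gt0 ?expR_gt0.
Qed.

Lemma mw_update_sum1 P v : (forall k, 0 < P k) -> \sum_(j < n) mw_update P v j = 1.
Proof.
by move=> P_gt0; rewrite /mw_update -mulr_suml mulfV // lt0r_neq0 // mw_norm_gt0.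
Qed.

Lemma mw_pos_dist P v : pos_dist P -> pos_dist (mw_update P v).
Proof.
by move=> [P_gt0 _]; split=> [j|]; [exact: mw_update_gt0 | exact: mw_update_sum1].
Qed.

Lemma mw_updateD P v w : (forall j, 0 < P j) ->
  mw_update (mw_update P v) w = mw_update P (fun j => v j + w j).
Proof.
move=> P_gt0; have Zv := mw_norm_gt0 v P_gt0.
have Zvw := mw_norm_gt0 (fun j => v j + w j) P_gt0.
have norm_comp : mw_norm (mw_update P v) w
    = mw_norm P (fun j => v j + w j) / mw_norm P v.
  rewrite /mw_norm mulr_suml; apply: eq_bigr => k _.
  by rewrite mw_updateE /mw_norm expRD; field; exact: lt0r_neq0 Zv.
apply/funext => j; rewrite !mw_updateE norm_comp expRD.
by field; rewrite !lt0r_neq0.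
Qed.

Lemma ln_mw_ratio Q v j : (forall k, 0 < Q k) ->
  ln (mw_update Q v j / Q j) = v j - ln (mw_norm Q v).
Proof.
move=> Q_gt0; have Z_gt0 := mw_norm_gt0 v Q_gt0.
have -> : mw_update Q v j / Q j = expR (v j) / mw_norm Q v.
  by rewrite mw_updateE; field; rewrite !lt0r_neq0.
by rewrite ln_div ?posrE ?expR_gt0 // expRK.
Qed.

Lemma KL_subr_mw u Q v : (forall j, 0 <= u j) -> \sum_(j < n) u j = 1 ->
  (forall j, 0 < Q j) ->
  KL u Q - KL u (mw_update Q v) = dotv u v - ln (mw_norm Q v).
Proof.
move=> u_ge0 u_sum1 Q_gt0; rewrite KL_subr // => [|j]; last exact: mw_update_gt0.
under eq_bigr => j _ do rewrite ln_mw_ratio // mulrBr.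
by rewrite sumrB -mulr_suml u_sum1 mul1r.
Qed.

Lemma mw_three_point u Q v : (forall j, 0 <= u j) -> \sum_(j < n) u j = 1 ->
  (forall j, 0 < Q j) ->
  KL u Q - KL u (mw_update Q v) - KL (mw_update Q v) Q
  = dotv (fun j => u j - mw_update Q v j) v.
Proof.
move=> u_ge0 u_sum1 Q_gt0; set Q' := mw_update Q v.
have Q'_gt0 j : 0 < Q' j by exact: mw_update_gt0.
have KL_Q'Q : KL Q' Q = dotv Q' v - ln (mw_norm Q v).
  rewrite -[LHS]subr0 -(KL_self Q'_gt0) KL_subr_mw // => [j|].
    exact: ltW.
  exact: mw_update_sum1.
rewrite KL_subr_mw // KL_Q'Q /dotv.
under [RHS]eq_bigr => j _ do rewrite mulrBl.
by rewrite sumrB; ring.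
Qed.

End Update.
End PositiveDistributions.

Section OptimisticHedge.
Variables (R : realType) (n : nat) (eta : R) (ell : nat -> 'I_n -> R).
Hypothesis n_gt0 : (0 < n)%N.

Local Notation x := (oh_iter eta ell).
Local Notation x_tilde := (oh_tilde eta ell).
Local Notation l := (loss0 ell).

Lemma oh_iter_pos_dist t : pos_dist (x t).
Proof.
elim: t => [|[|s] IH]; try exact: uniform_pos_dist.
exact: mw_pos_dist.
Qed.

Lemma oh_tilde_pos_dist t : pos_dist (x_tilde t).
Proof. by case: t => [|s]; [exact: uniform_pos_dist | exact/mw_pos_dist/oh_iter_pos_dist]. Qed.

Lemma oh_iter_succ s : x s.+1 = mw_update (x_tilde s) (fun j => - eta * l s j).
Proof.
case: s => [|s].
  have [_ U_sum1] := uniform_pos_dist R n_gt0.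
  by rewrite mw_update0 // => j; rewrite /= mulr0.
rewrite /oh_tilde /= (mw_updateD n_gt0); last by have [] := oh_iter_pos_dist s.+1.
by congr mw_update; apply/funext => j /=; ring.
Qed.

Lemma oh_tilde_succ s : x_tilde s.+1 = mw_update (x_tilde s) (fun j => - eta * l s.+1 j).
Proof.
rewrite {1}/oh_tilde oh_iter_succ (mw_updateD n_gt0); last by have [] := oh_tilde_pos_dist s.
by congr mw_update; apply/funext => j /=; ring.
Qed.

Hypothesis eta_neq0 : eta != 0.

(* Exact one-step regret identity: two applications of the three-point
   identity, from x~(s) to x~(s+1) (against x* ) and to x(s+1) (against x~(s+1)). *)
Lemma oh_step_identity (xstar : 'I_n -> R) s : in_simplex xstar ->
  dotv (fun j => x s.+1 j - xstar j) (l s.+1)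
  = dotv (fun j => x s.+1 j - x_tilde s.+1 j) (fun j => l s.+1 j - l s j)
    + eta^-1 * (KL xstar (x_tilde s) - KL xstar (x_tilde s.+1)
                - KL (x_tilde s.+1) (x s.+1) - KL (x s.+1) (x_tilde s)).
Proof.
move=> [xstar_ge0 xstar_sum1].
have [tilde_gt0 _] := oh_tilde_pos_dist s.
have [tilde'_gt0 tilde'_sum1] := oh_tilde_pos_dist s.+1.
have to_tilde := mw_three_point n_gt0 (fun j => - eta * l s.+1 j) xstar_ge0 xstar_sum1
  tilde_gt0.
have to_iter := mw_three_point n_gt0 (fun j => - eta * l s j) (fun j => ltW (tilde'_gt0 j))
  tilde'_sum1 tilde_gt0.
rewrite -oh_tilde_succ in to_tilde; rewrite -oh_iter_succ in to_iter.
have -> : KL xstar (x_tilde s) - KL xstar (x_tilde s.+1)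
          - KL (x_tilde s.+1) (x s.+1) - KL (x s.+1) (x_tilde s)
  = (KL xstar (x_tilde s) - KL xstar (x_tilde s.+1) - KL (x_tilde s.+1) (x_tilde s))
    + (KL (x_tilde s.+1) (x_tilde s) - KL (x_tilde s.+1) (x s.+1)
       - KL (x s.+1) (x_tilde s)) by ring.
rewrite to_tilde to_iter /dotv -big_split mulr_sumr -big_split /=.
by apply: eq_bigr => j _; field.
Qed.

(* Summing the one-step identity: the KL(x*; x~(t)) terms telescope. *)
Lemma oh_regret_identity (xstar : 'I_n -> R) T : in_simplex xstar ->
  \sum_(1 <= t < T.+1) dotv (fun j => x t j - xstar j) (l t)
  = \sum_(1 <= t < T.+1)
       dotv (fun j => x t j - x_tilde t j) (fun j => l t j - l t.-1 j)
    + eta^-1 * (KL xstar (x_tilde 0) - KL xstar (x_tilde T))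
    - eta^-1 * \sum_(1 <= t < T.+1) KL (x_tilde t) (x t)
    - eta^-1 * \sum_(1 <= t < T.+1) KL (x t) (x_tilde t.-1).
Proof.
move=> xstar_dist; elim: T => [|T IH].
  by rewrite !big_geq // subrr !mulr0 !subr0 addr0.
by rewrite !(big_nat_recr T.+1) //= IH oh_step_identity //; ring.
Qed.

End OptimisticHedge.

Theorem lemmaA5 (R : realType) (n : nat) (eta : R) (T : nat)
    (ell : nat -> 'I_n -> R) (xstar : 'I_n -> R) :
  (0 < n)%N -> 0 < eta -> in_simplex xstar ->
  \sum_(1 <= t < T.+1)
      dotv (fun j => oh_iter eta ell t j - xstar j) (loss0 ell t)
  <= ln (n%:R) / eta
     + \sum_(1 <= t < T.+1)
         dual_norm (oh_iter eta ell t)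
           (fun j => oh_iter eta ell t j - oh_tilde eta ell t j)
         * Num.sqrt (varP (oh_iter eta ell t)
                       (fun j => loss0 ell t j - loss0 ell t.-1 j))
     - eta^-1 * \sum_(1 <= t < T.+1) KL (oh_tilde eta ell t) (oh_iter eta ell t)
     - eta^-1 * \sum_(1 <= t < T.+1) KL (oh_iter eta ell t) (oh_tilde eta ell t.-1).
Proof.
move=> n_gt0 eta_gt0 xstar_dist.
rewrite oh_regret_identity ?lt0r_neq0 //.
have prediction_error : \sum_(1 <= t < T.+1)
       dotv (fun j => oh_iter eta ell t j - oh_tilde eta ell t j)
         (fun j => loss0 ell t j - loss0 ell t.-1 j)
  <= \sum_(1 <= t < T.+1)
       dual_norm (oh_iter eta ell t)
         (fun j => oh_iter eta ell t j - oh_tilde eta ell t j)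
       * Num.sqrt (varP (oh_iter eta ell t)
                     (fun j => loss0 ell t j - loss0 ell t.-1 j)).
  apply: ler_sum => t _; apply: dotv_subr_le_dual_var; first exact: oh_iter_pos_dist.
  by have [] := oh_tilde_pos_dist eta ell n_gt0 t.
have initial_KL : eta^-1 * (KL xstar (oh_tilde eta ell 0) - KL xstar (oh_tilde eta ell T))
    <= ln (n%:R) / eta.
  rewrite mulrC ler_pM2r ?invr_gt0 //.
  exact/KL_uniform_subr_le/oh_tilde_pos_dist.
lra.
Qed.
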